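(* Consider the faulty-starter delivery problem described in the context, with finisher starting position $(x,y)$, $y\ge0$, and assume $(x,y)\notin D(1,1)$, i.e. $\sqrt{(x-1)^2+y^2}\ge 1$. Let $z_1=\sqrt{(x-1)^2+y^2}$ and $$t_1=\begin{cases}1-\dfrac{3y}{4} & \text{if } x=1,\\[2mm] \dfrac{x^2+y^2+z_1(1-x)-1-z_1\sqrt{x(x+z_1-2)+y^2-z_1+1}}{2(x-1)} & \text{otherwise.}\end{cases}$$ Then the competitive ratio of $\mathcal{A}_1$ equals $\mathrm{CR}_{\mathcal{A}_1}(\max\{t_1,0\})$, where $\mathrm{CR}_{\mathcal{A}_1}(t)=\dfrac{\sqrt{(x-1)^2+y^2}+2(1-t)}{\max\{1,\sqrt{(x-t)^2+y^2}+1-t\}}$.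
   Context: Setting. In the plane let $S=(0,0)$ and $T=(1,0)$. A ''starter'' drone carrying a package starts at $S$ at time $0$ and moves at unit speed along $\overline{ST}$ towards $T$. At an unknown time $t\in[0,1]$ it fails and stays forever at $(t,0)$ with the package. A ''finisher'' drone starts at time $0$ at $P=(x,y)$ with $y\ge0$, moves at unit speed and can stop and turn instantaneously. The package can be handed over only when the drones are co-located; it is delivered at the first time the finisher, carrying the package, is at $T$. An online algorithm $\mathcal{A}$ specifies the finisher's trajectory using only $(x,y)$; $A(t)$ is its delivery time for fail time $t$. $\mathrm{Opt}(t)=\max\{1,\sqrt{(x-t)^2+y^2}+1-t\}$ is the optimal offline delivery time. $\mathrm{CR}_{\mathcal{A}}(t)=A(t)/\mathrm{Opt}(t)$ and $\mathrm{CR}_{\mathcal{A}}=\sup_{0\le t\le1}\mathrm{CR}_{\mathcal{A}}(t)$. $D(c,r)$ denotes the open disk of radius $r$ centered at $(c,0)$. Algorithm $\mathcal{A}_1$: the finisher goes straight to $T$, then moves along the segment towards $S$ until it finds the package, then returns to $T$; its delivery time is $A_1(t)=\sqrt{(x-1)^2+y^2}+2(1-t)$. *)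

From Stdlib Require Import Reals.
Open Scope R_scope.

(* Delivery time of algorithm A_1 for fail time t, finisher starting at (x,y). *)
Definition A1 (x y t : R) : R := sqrt ((x - 1)^2 + y^2) + 2 * (1 - t).

Definition Opt (x y t : R) : R := Rmax 1 (sqrt ((x - t)^2 + y^2) + 1 - t).

Definition CR_A1_at (x y t : R) : R := A1 x y t / Opt x y t.

(* The competitive ratio of A_1 is the supremum of CR_A1_at over t in [0,1];
   "CR_{A_1} = c" is expressed as: c is the least upper bound of this set. *)
Definition CR_A1_set (x y : R) : R -> Prop :=
  fun r => exists t, 0 <= t <= 1 /\ r = CR_A1_at x y t.

Definition z1 (x y : R) : R := sqrt ((x - 1)^2 + y^2).

Definition t1 (x y : R) : R :=
  if Req_EM_T x 1 then 1 - 3 * y / 4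
  else (x^2 + y^2 + z1 x y * (1 - x) - 1
        - z1 x y * sqrt (x * (x + z1 x y - 2) + y^2 - z1 x y + 1))
       / (2 * (x - 1)).

From Stdlib Require Import Reals Lra Psatz.
Open Scope R_scope.

(* With a = x - 1 and u = 1 - t, the finisher's competitive ratio is
   (z + 2u) / (sqrt((a + u)^2 + y^2) + u), where z = z1 x y: the maximum in Opt is never
   attained by 1 because sqrt((a + u)^2 + y^2) + u >= z >= 1.  The denominator is convex in u (triangle
   inequality) and the numerator affine, so the ratio is quasi-concave, and its supremum over
   u in [0,1] is attained at its global maximizer s clamped to 1.  Writing
   a = z (p^2 - 1), y^2 = z^2 p^2 (2 - p^2), the maximizer is s = z (p+2) / (2 (p+1)) with
   maximum c = (2p+3) / (p+1)^2, certified by the identity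
   c^2 ((a+u)^2 + y^2) - (z + (2-c) u)^2 = 4 (c-1) (u - s)^2;
   finally t1 = 1 - s. *)

Lemma Rle_div_r_iff a b c : 0 < b -> (c <= a / b <-> c * b <= a).
Proof.
  intros Hb. replace a with (a / b * b) at 2 by (field; lra).
  split; intros H.
  - apply Rmult_le_compat_r; lra.
  - apply Rmult_le_reg_r with b; lra.
Qed.

Lemma Rle_div_l_iff a b c : 0 < b -> (a / b <= c <-> a <= c * b).
Proof.
  intros Hb. replace a with (a / b * b) at 2 by (field; lra).
  split; intros H.
  - apply Rmult_le_compat_r; lra.
  - apply Rmult_le_reg_r with b; lra.
Qed.

Lemma sum_sq_nonneg a b : 0 <= a^2 + b^2.
Proof. apply Rplus_le_le_0_compat; apply pow2_ge_0. Qed.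

Lemma sqrt_sum_sq_triangle a1 b1 a2 b2 :
  sqrt ((a1 + a2)^2 + (b1 + b2)^2) <= sqrt (a1^2 + b1^2) + sqrt (a2^2 + b2^2).
Proof.
  pose proof (triangle (a1 + a2) (b1 + b2) 0 0 a2 b2) as H.
  unfold dist_euc in H. rewrite !Rsqr_pow2, !Rminus_0_r, !Rplus_minus_r in H.
  exact H.
Qed.

Lemma sqrt_sum_sq_scale l X Y :
  0 <= l -> sqrt ((l * X)^2 + (l * Y)^2) = l * sqrt (X^2 + Y^2).
Proof.
  intros Hl. replace ((l * X)^2 + (l * Y)^2) with (l^2 * (X^2 + Y^2)) by ring.
  rewrite sqrt_mult by nra. now rewrite sqrt_pow2.
Qed.

Lemma sqrt_shift_convex a y u v l : 0 <= l <= 1 ->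
  sqrt ((a + (l * u + (1 - l) * v))^2 + y^2)
  <= l * sqrt ((a + u)^2 + y^2) + (1 - l) * sqrt ((a + v)^2 + y^2).
Proof.
  intros Hl.
  rewrite <- (sqrt_sum_sq_scale l), <- (sqrt_sum_sq_scale (1 - l)) by lra.
  replace (a + (l * u + (1 - l) * v)) with (l * (a + u) + (1 - l) * (a + v)) by ring.
  replace (y^2) with ((l * y + (1 - l) * y)^2) at 1 by ring.
  apply sqrt_sum_sq_triangle.
Qed.

Lemma sqrt_shift_lower a y u :
  0 <= u -> sqrt (a^2 + y^2) <= sqrt ((a + u)^2 + y^2) + u.
Proof.
  intros Hu. pose proof (sqrt_sum_sq_triangle (a + u) y (- u) 0) as H.
  replace (a + u + - u) with a in H by ring.
  replace (y + 0) with y in H by ring.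
  replace ((- u)^2 + 0^2) with (u^2) in H by ring.
  now rewrite sqrt_pow2 in H.
Qed.

Definition ratio (a y z u : R) : R := (z + 2 * u) / (sqrt ((a + u)^2 + y^2) + u).

Definition peak_point (z p : R) : R := z * (p + 2) / (2 * (p + 1)).

Definition peak_value (p : R) : R := (2 * p + 3) / (p + 1)^2.

Section Peak.

Variables a y z p : R.
Hypothesis z_pos : 0 < z.
Hypothesis p_ge0 : 0 <= p.
Hypothesis a_param : a = z * (p^2 - 1).
Hypothesis y_param : y^2 = z^2 * p^2 * (2 - p^2).

Lemma denominator_pos u : 0 <= u -> 0 < sqrt ((a + u)^2 + y^2) + u.
Proof.
  intros Hu.
  assert (Hz : sqrt (a^2 + y^2) = z).
  { rewrite <- (sqrt_pow2 z) by lra. f_equal. rewrite y_param, a_param. ring. }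
  pose proof (sqrt_shift_lower a y u Hu). lra.
Qed.

Lemma ratio_nonneg u : 0 <= u -> 0 <= ratio a y z u.
Proof.
  intros Hu. unfold ratio. apply Rle_div_r_iff; [now apply denominator_pos | lra].
Qed.

Lemma ratio_le_peak_value u : 0 <= u -> ratio a y z u <= peak_value p.
Proof.
  intros Hu. set (c := peak_value p).
  assert (Hp2 : p^2 <= 2).
  { destruct (Rle_dec (p^2) 2) as [|Hn]; [assumption|].
    assert (0 < z^2 * p^2) by (apply Rmult_lt_0_compat; nra). nra. }
  assert (Hc1 : 1 <= c).
  { unfold c, peak_value. apply Rle_div_r_iff; nra. }
  assert (Hcert : c^2 * ((a + u)^2 + y^2) - (z + (2 - c) * u)^2
                  = 4 * (c - 1) * (u - peak_point z p)^2).
  { unfold c, peak_value, peak_point. rewrite y_param, a_param. field. lra. }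
  pose proof (pow2_sqrt ((a + u)^2 + y^2) (sum_sq_nonneg _ _)) as Hd2.
  pose proof (sqrt_pos ((a + u)^2 + y^2)) as Hd0.
  set (d := sqrt ((a + u)^2 + y^2)) in *.
  assert (Hmain : z + (2 - c) * u <= c * d).
  { apply Rsqr_incr_0_var; [rewrite !Rsqr_pow2 | apply Rmult_le_pos; lra].
    assert (0 <= 4 * (c - 1) * (u - peak_point z p)^2)
      by (apply Rmult_le_pos; [lra | apply pow2_ge_0]).
    nra. }
  unfold ratio. fold d. apply Rle_div_l_iff; [now apply denominator_pos | lra].
Qed.

Lemma ratio_peak : ratio a y z (peak_point z p) = peak_value p.
Proof.
  set (ds := z * p * (2 * p + 3) / (2 * (p + 1))).
  assert (Hds0 : 0 <= ds) by (apply Rle_div_r_iff; nra).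
  assert (Hds : sqrt ((a + peak_point z p)^2 + y^2) = ds).
  { rewrite <- (sqrt_pow2 ds Hds0). f_equal.
    rewrite y_param, a_param. unfold peak_point, ds. field. lra. }
  unfold ratio. rewrite Hds. unfold ds, peak_point, peak_value.
  field. repeat split; nra.
Qed.

Lemma ratio_quasiconcave u v l c :
  0 <= u -> 0 <= v -> 0 <= l <= 1 -> 0 <= c ->
  c <= ratio a y z u -> c <= ratio a y z v -> c <= ratio a y z (l * u + (1 - l) * v).
Proof.
  intros Hu Hv Hl Hc. unfold ratio.
  rewrite !Rle_div_r_iff by (apply denominator_pos; nra).
  intros HNu HNv.
  pose proof (sqrt_shift_convex a y u v l Hl) as Hconv.
  assert (Hscaled : c * sqrt ((a + (l * u + (1 - l) * v))^2 + y^2)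
    <= c * (l * sqrt ((a + u)^2 + y^2) + (1 - l) * sqrt ((a + v)^2 + y^2)))
    by (apply Rmult_le_compat_l; lra).
  nra.
Qed.

Lemma ratio_le_ratio_1 u :
  1 <= peak_point z p -> 0 <= u <= 1 -> ratio a y z u <= ratio a y z 1.
Proof.
  intros Hpk Hu. set (s := peak_point z p) in *.
  destruct (Rle_lt_or_eq_dec u 1 (proj2 Hu)) as [Hlt | ->]; [|apply Rle_refl].
  set (l := (s - 1) / (s - u)).
  assert (Hl : 0 <= l <= 1).
  { unfold l. split; [apply Rle_div_r_iff | apply Rle_div_l_iff]; lra. }
  replace (ratio a y z 1) with (ratio a y z (l * u + (1 - l) * s))
    by (f_equal; unfold l; field; lra).
  apply ratio_quasiconcave; try lra; [now apply ratio_nonneg |].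
  unfold s. rewrite ratio_peak. now apply ratio_le_peak_value.
Qed.

Lemma ratio_max_on_unit u :
  0 <= u <= 1 -> ratio a y z u <= ratio a y z (Rmin (peak_point z p) 1).
Proof.
  intros Hu. destruct (Rle_dec (peak_point z p) 1) as [Hle | Hgt].
  - rewrite Rmin_left, ratio_peak by assumption. apply ratio_le_peak_value. lra.
  - rewrite Rmin_right by lra. apply ratio_le_ratio_1; lra.
Qed.

End Peak.

(* [p^2 = 1 + cos θ], where θ is the polar angle of (a, y). *)
Lemma half_angle_param a y z : 0 < z -> z^2 = a^2 + y^2 ->
  exists p, 0 <= p /\ a = z * (p^2 - 1) /\ y^2 = z^2 * p^2 * (2 - p^2).
Proof.
  intros Hz Hzz.
  assert (Ha : - a <= z) by (apply Rsqr_incr_0_var; [rewrite !Rsqr_pow2 | ]; nra).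
  assert (Hq : 0 <= (z + a) / z) by (apply Rle_div_r_iff; lra).
  exists (sqrt ((z + a) / z)).
  rewrite pow2_sqrt by assumption. split; [apply sqrt_pos|].
  split; [field; lra|].
  replace (y^2) with (z^2 - a^2) by lra. field. lra.
Qed.

Lemma t1_eq_peak x y p : 0 <= y -> 0 < z1 x y -> 0 <= p ->
  x - 1 = z1 x y * (p^2 - 1) -> y^2 = z1 x y ^ 2 * p^2 * (2 - p^2) ->
  t1 x y = 1 - peak_point (z1 x y) p.
Proof.
  intros Hy Hz Hp Ha Hya. unfold t1.
  destruct (Req_EM_T x 1) as [Hx | Hx].
  - assert (Hzy : z1 x y = y).
    { unfold z1. rewrite Hx. replace ((1 - 1)^2 + y^2) with (y^2) by ring.
      now apply sqrt_pow2. }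
    assert (Hp1 : p = 1).
    { assert (Hp2 : p^2 = 1).
      { destruct (Rmult_integral (z1 x y) (p^2 - 1)); lra. }
      now rewrite <- (sqrt_pow2 p Hp), Hp2, sqrt_1. }
    unfold peak_point. rewrite Hzy, Hp1. field.
  - set (z := z1 x y) in *.
    replace (x * (x + z - 2) + y^2 - z + 1) with ((z * p)^2)
      by (replace x with (1 + z * (p^2 - 1)) by lra; rewrite Hya; ring).
    rewrite sqrt_pow2 by nra.
    assert (Hne : z * (p^2 - 1) <> 0) by lra.
    replace x with (1 + z * (p^2 - 1)) by lra. rewrite Hya.
    unfold peak_point. field. split; [lra|].
    replace (1 + z * (p^2 - 1) - 1) with (z * (p^2 - 1)) by ring. exact Hne.
Qed.

Lemma CR_A1_at_eq_ratio x y t : t <= 1 -> 1 <= z1 x y ->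
  CR_A1_at x y t = ratio (x - 1) y (z1 x y) (1 - t).
Proof.
  intros Ht Hz. unfold CR_A1_at, A1, Opt, ratio, z1 in *.
  replace (x - t) with (x - 1 + (1 - t)) by ring.
  pose proof (sqrt_shift_lower (x - 1) y (1 - t) ltac:(lra)).
  rewrite Rmax_right by lra. f_equal. ring.
Qed.

Theorem theorem2 (x y : R) :
  0 <= y ->
  1 <= sqrt ((x - 1)^2 + y^2) ->
  is_lub (CR_A1_set x y) (CR_A1_at x y (Rmax (t1 x y) 0)).
Proof.
  intros Hy Hz. change (1 <= z1 x y) in Hz.
  assert (Hzz : z1 x y ^ 2 = (x - 1)^2 + y^2) by (apply pow2_sqrt, sum_sq_nonneg).
  destruct (half_angle_param (x - 1) y (z1 x y)) as [p [Hp [Ha Hya]]]; [lra | lra |].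
  set (s := peak_point (z1 x y) p).
  assert (Hs : 0 <= s) by (apply Rle_div_r_iff; nra).
  assert (Hclamp : Rmax (t1 x y) 0 = 1 - Rmin s 1).
  { rewrite (t1_eq_peak x y p) by (auto; lra). fold s.
    unfold Rmax, Rmin. repeat destruct Rle_dec; lra. }
  assert (Hm : 0 <= Rmin s 1 <= 1) by (unfold Rmin; destruct Rle_dec; lra).
  rewrite Hclamp. split.
  - intros r [t [Ht ->]].
    rewrite !CR_A1_at_eq_ratio by (auto; lra).
    replace (1 - (1 - Rmin s 1)) with (Rmin s 1) by ring.
    apply ratio_max_on_unit; auto; lra.
  - intros b Hb. apply Hb. exists (1 - Rmin s 1). split; [lra | reflexivity].
Qed.
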